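(* Let $s\ge1$ and let $\mathcal{G}_{2s}\subset GL_{2s}(\mathbb{Z})$ be the group generated by the linear maps $\sigma_1,\dotsc,\sigma_{2s}$ of $\mathbb{Z}^{2s}$ given in coordinates $k=(k_1,\dotsc,k_{2s})$ by \[ \sigma_1:\ k_1\mapsto k_1,\quad k_j\mapsto k_j+k_1\ (j>1); \] \[ \sigma_i\ (2\le i\le 2s):\ k_{i-1}\mapsto 2k_{i-1}-k_i,\quad k_i\mapsto k_{i-1},\quad k_j\mapsto k_j\ (j\ne i-1,i). \] For nonzero $k\in\mathbb{Z}^{2s}$ put $\gamma(k)=\gcd(k_1,\dotsc,k_{2s})$, $\alpha(k)=\#\{i:\ k_i/\gamma(k)\equiv1\pmod2\}$ and $\delta(k)=|2\alpha(k)-2s-1|$. Then the map $k\mapsto(\gamma(k),\delta(k))$ induces a bijection between the set of orbits of $\mathcal{G}_{2s}$ on $\mathbb{Z}^{2s}\setminus\{0\}$ and the set of pairs $(\gamma,\delta)$ with $\gamma\in\mathbb{Z}_{>0}$ and $\delta\in\{1,3,5,\dotsc,2s-1\}$. *)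

From mathcomp Require Import all_boot all_order all_algebra.
Set Implicit Arguments. Unset Strict Implicit. Unset Printing Implicit Defensive.
Import Order.TTheory GRing.Theory Num.Theory.
Local Open Scope ring_scope.

(* Vectors of Z^n are column vectors 'cV[int]_n; coordinates are 0-based:
   coordinate k_j (paper) is entry j-1.  The generator sigma_i (paper, 1<=i<=n)
   is [sigma (i-1)] here. *)
Definition sigma (n : nat) (i : 'I_n) : 'M[int]_n :=
  \matrix_(a < n, b < n)
    if (i : nat) == 0%N then
      (if (a : nat) == 0%N then (b == a)%:R else (b == a)%:R + ((b : nat) == 0%N)%:R)
    else if (a : nat) == i.-1 then
      2 * ((b : nat) == i.-1)%:R - (b == i)%:R
    else if a == i then ((b : nat) == i.-1)%:R
    else (b == a)%:R.

Inductive inG (n : nat) : 'M[int]_n -> Prop :=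
  | inG_one : inG 1%:M
  | inG_gen : forall i, inG (sigma i)
  | inG_inv : forall i, inG (invmx (sigma i))
  | inG_mul : forall g h, inG g -> inG h -> inG (g *m h).

Definition same_orbit (n : nat) (k k' : 'cV[int]_n) : Prop :=
  exists2 g, @inG n g & k' = g *m k.

Definition gammaK (n : nat) (k : 'cV[int]_n) : int :=
  \big[gcdz/0]_(j < n) k j ord0.

Definition alphaK (n : nat) (k : 'cV[int]_n) : nat :=
  #|[set j : 'I_n | modz (divz (k j ord0) (gammaK k)) 2 == 1]|.

Definition deltaK (n : nat) (k : 'cV[int]_n) : nat :=
  `|((2 * alphaK k)%:Z - (n.+1)%:Z)|%N.

(* Pass to the differences e_j = k_j - k_(j-1) (with k_0 = 0) of the coordinates:
   sigma_i becomes the elementary move e_(i-1) -= e_i, e_(i+1) += e_i, and k_a is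
   the partial sum e_1 + ... + e_a.  The gcd is invariant since the moves are
   unimodular.  Modulo 2, an odd move at i > 1 swaps the parities of k_(i-1) and
   k_i, while an odd move at i = 1 flips the parities of k_2, ..., k_n and keeps
   k_1 odd; so (#odd k_a - #even k_a) - 1, whose absolute value is delta, is
   preserved up to sign.  Conversely, by induction on n in steps of 2, a
   Euclidean algorithm makes e_n = +-1 and then clears e_(n-1); the first n - 2
   coordinates are normalised by induction, and the parity of their gcd decides
   whether e lands on eps_n or on eps_(m-1) + eps_n, with m fixed by delta. *)

From mathcomp Require Import all_boot all_order all_algebra.
From mathcomp Require Import perm zify ring.
From Stdlib Require Import FunctionalExtensionality.
Import Order.TTheory GRing.Theory Num.Theory.
Local Open Scope ring_scope.
Set Implicit Arguments. Unset Strict Implicit. Unset Printing Implicit Defensive.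

Ltac case_ifs :=
  repeat match goal with |- context [if ?b then _ else _] => case: (boolP b) => ? end.

Definition vec := nat -> int.

Definition twist (L i : nat) (t : int) (e : vec) : vec :=
  fun j => if j.+1 == i then e j - t * e i
           else if (j == i.+1) && (j < L)%N then e j + t * e i
           else e j.

Section Twist.
Variable L : nat.

Lemma twist_at i t e : twist L i t e i = e i.
Proof. by rewrite /twist ifF ?ifF //; lia. Qed.

Lemma twist_prev i t e : (0 < i)%N -> twist L i t e i.-1 = e i.-1 - t * e i.
Proof. by move=> hi; rewrite /twist ifT //; lia. Qed.

Lemma twist_next i t e : (i.+1 < L)%N -> twist L i t e i.+1 = e i.+1 + t * e i.
Proof. by move=> hi; rewrite /twist ifF ?ifT //; lia. Qed.

Lemma twist_other i t e j : j.+1 != i -> j != i.+1 -> twist L i t e j = e j.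
Proof. by move=> h1 h2; rewrite /twist (negbTE h1) (negbTE h2). Qed.

Lemma twistD i a b e : twist L i a (twist L i b e) = twist L i (a + b) e.
Proof.
apply: functional_extensionality => j; rewrite {1 3}/twist twist_at /twist.
by case_ifs; ring.
Qed.

Lemma twist0 i e : twist L i 0 e = e.
Proof. by apply: functional_extensionality => j; rewrite /twist; case_ifs; ring. Qed.

Lemma twistK i t e : twist L i (- t) (twist L i t e) = e.
Proof. by rewrite twistD addNr twist0. Qed.

Inductive reach : vec -> vec -> Prop :=
| reach_refl e : reach e e
| reach_step e i t e' : (i < L)%N -> reach (twist L i t e) e' -> reach e e'.

Lemma reach_trans a b c : reach a b -> reach b c -> reach a c.
Proof. by elim=> // e i t e' hi _ IH /IH; apply: reach_step. Qed.

Lemma reach_twist i t e : (i < L)%N -> reach e (twist L i t e).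
Proof. by move=> hi; apply: reach_step hi (reach_refl _). Qed.

Lemma reach_sym a b : reach a b -> reach b a.
Proof.
elim=> [e|e i t e' hi _ IH]; first exact: reach_refl.
by apply: reach_trans IH _; rewrite -{2}(twistK i t e); apply: reach_twist.
Qed.

Definition supported (e : vec) := forall j, (L <= j)%N -> e j = 0.

Lemma reach_supported a b : reach a b -> supported a -> supported b.
Proof.
elim=> // e i t e' hi _ IH hs; apply: IH => j hj.
by rewrite /twist; case_ifs; rewrite ?hs //; lia.
Qed.

Definition dvdv (d : int) (e : vec) := forall j, (j < L)%N -> (d %| e j)%Z.

Lemma twist_dvdv i t e d : (i < L)%N -> dvdv d e -> dvdv d (twist L i t e).
Proof.
move=> hi hd j hj; rewrite /twist.
by case_ifs; rewrite ?rpredB ?rpredD ?dvdz_mull ?hd //; lia.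
Qed.

Lemma reach_dvdv a b d : reach a b -> dvdv d a -> dvdv d b.
Proof. by elim=> // e i t e' hi _ IH hd; apply/IH/twist_dvdv. Qed.

Definition primitive (e : vec) := forall d, dvdv d e -> (d %| 1)%Z.

Lemma reach_primitive a b : reach a b -> primitive a -> primitive b.
Proof. by move=> r hp d hd; apply/hp/(reach_dvdv (reach_sym r)). Qed.

Lemma primitive_unit e j : (j < L)%N -> e j * e j = 1 -> primitive e.
Proof. by move=> hj he d /(_ j hj) /(dvdz_mulr (e j)); rewrite he. Qed.

Definition scalev (c : int) (e : vec) : vec := fun j => c * e j.

Lemma twist_scalev i t c e : twist L i t (scalev c e) = scalev c (twist L i t e).
Proof. by apply: functional_extensionality => j; rewrite /twist /scalev; case_ifs; ring. Qed.

Lemma reach_scalev c a b : reach a b -> reach (scalev c a) (scalev c b).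
Proof.
elim=> [e|e i t e' hi _ IH]; first exact: reach_refl.
by apply: (reach_step (i := i) (t := t)); rewrite // twist_scalev.
Qed.

End Twist.

Definition oddz (x : int) : bool := (x %% 2)%Z == 1.

Lemma oddzD x y : oddz (x + y) = oddz x (+) oddz y.
Proof. by rewrite /oddz; do 3 case: eqP => ? //=; exfalso; lia. Qed.

Lemma oddzN x : oddz (- x) = oddz x.
Proof. by rewrite /oddz; do 2 case: eqP => ? //=; exfalso; lia. Qed.

Lemma oddzM x y : oddz (x * y) = oddz x && oddz y.
Proof.
have [hx|hx] : (x %% 2 = 0 \/ x %% 2 = 1)%Z by lia.
all: have [hy|hy] : (y %% 2 = 0 \/ y %% 2 = 1)%Z by lia.
all: by rewrite /oddz -modzMm hx hy.
Qed.

Definition b2z (b : bool) : int := if b then 1 else 0.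

Lemma oddz_b2z b : oddz (b2z b) = b.
Proof. by case: b. Qed.

Definition pm (b : bool) : int := if b then 1 else -1.

Lemma pmN b : pm (~~ b) = - pm b.
Proof. by case: b. Qed.

Definition psum (a : nat) (e : vec) : int := \sum_(k < a.+1) e k.

Lemma psum0 e : psum 0 e = e 0%N.
Proof. by rewrite /psum big_ord1. Qed.

Lemma psumS a e : psum a.+1 e = psum a e + e a.+1.
Proof. by rewrite /psum big_ord_recr. Qed.

(* If [e] holds the differences of the paper's coordinates [k], then [psum a e]
   is [k_(a+1)], and [delta] is the paper's [delta] of [k] ([deltaK_psums]). *)
Definition psi (L : nat) (e : vec) : int := \sum_(a < L) pm (oddz (psum a e)).

Definition delta (L : nat) (e : vec) : nat := absz (psi L e - 1).

Lemma delta_eqmod2 L e e' : (forall j, (j < L)%N -> oddz (e j) = oddz (e' j)) ->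
  delta L e = delta L e'.
Proof.
move=> he; rewrite /delta /psi; congr (absz (_ - 1)); apply: eq_bigr => -[a ha] _ /=.
congr pm; elim: a ha => [|a IH] ha; first by rewrite !psum0 he.
by rewrite !psumS !oddzD IH ?he //; lia.
Qed.

Lemma psum_twist L i t e a : (a < L)%N ->
  psum a (twist L i t e) = psum a e + t * e i * (b2z (i < a)%N - b2z (0 < i <= a.+1)%N).
Proof.
elim: a => [|a IH] ha; first by rewrite !psum0 /twist /b2z; case_ifs; lia.
by rewrite !psumS IH; [rewrite /twist /b2z; case_ifs; lia | lia].
Qed.

Lemma oddz_psum_twist L i t e a : (a < L)%N -> oddz (t * e i) ->
  oddz (psum a (twist L i t e)) = oddz (psum a e) (+) ((i < a)%N (+) (0 < i <= a.+1)%N).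
Proof. by move=> ha ht; rewrite psum_twist // oddzD oddzM ht oddzD oddzN !oddz_b2z. Qed.

Lemma psi_twist_even L i t e : ~~ oddz (t * e i) -> psi L (twist L i t e) = psi L e.
Proof.
move=> ht; apply: eq_bigr => a _.
by rewrite psum_twist ?ltn_ord // oddzD oddzM (negbTE ht) andFb addbF.
Qed.

Lemma psi_twist0 L t e : (0 < L)%N -> oddz (t * e 0%N) ->
  psi L (twist L 0 t e) - 1 = - (psi L e - 1).
Proof.
case: L => // L _ ht; rewrite /psi !big_ord_recl.
have he0 : oddz (psum 0 e) by move: ht; rewrite psum0 oddzM => /andP[].
set S := \sum_(a < L) pm (oddz (psum (lift ord0 a) e)).
have -> : \sum_(a < L) pm (oddz (psum (lift ord0 a) (twist L.+1 0 t e))) = - S.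
  rewrite -sumrN; apply: eq_bigr => a _.
  by rewrite oddz_psum_twist ?ltn_ord //= addbT pmN.
by rewrite oddz_psum_twist //= addbF he0 /pm; ring.
Qed.

Lemma psi_twistS L p t e : (p.+1 < L)%N -> oddz (t * e p.+1) ->
  psi L (twist L p.+1 t e) = psi L e.
Proof.
move=> hp ht; have he : oddz (e p.+1) by move: ht; rewrite oddzM => /andP[].
have flips a : ((p.+1 < a)%N (+) (p < a.+1)%N) = (a == p) || (a == p.+1).
  by case h1 : (p.+1 < a)%N; case h2 : (p < a.+1)%N;
     case h3 : (a == p); case h4 : (a == p.+1) => //=; lia.
set x : 'I_L := Ordinal (ltnW hp); set y : 'I_L := Ordinal hp.
rewrite /psi [RHS](reindex_inj (@perm_inj _ (tperm x y))).
apply: eq_bigr => a _; congr pm; rewrite oddz_psum_twist // flips.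
case: tpermP => [->|->|/eqP hx /eqP hy] /=.
- by rewrite eqxx psumS oddzD he.
- by rewrite eqxx orbT psumS oddzD he -addbA addbb addbF.
- by rewrite -!val_eqE /= in hx hy; rewrite (negbTE hx) (negbTE hy) addbF.
Qed.

Lemma delta_twist L i t e : (i < L)%N -> delta L (twist L i t e) = delta L e.
Proof.
move=> hi; rewrite /delta; have [ht|ht] := boolP (oddz (t * e i)); last by rewrite psi_twist_even.
case: i hi ht => [|p] hi ht; first by rewrite psi_twist0 // abszN.
by rewrite psi_twistS.
Qed.

Lemma reach_delta L a b : reach L a b -> delta L b = delta L a.
Proof. by elim=> // e i t e' hi _ ->; rewrite delta_twist. Qed.

Definition unitv (j : nat) : vec := fun i => b2z (i == j).

Lemma psum_unitv a j : psum a (unitv j) = b2z (j <= a)%N.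
Proof. by elim: a => [|a IH]; rewrite ?psum0 ?psumS ?IH /unitv /b2z; case_ifs; lia. Qed.

Lemma unitv_supported L j : (j < L)%N -> supported L (unitv j).
Proof. by move=> hj i hi; rewrite /unitv /b2z ifF //; lia. Qed.

Lemma unitv_primitive L j : (j < L)%N -> primitive L (unitv j).
Proof. by move=> hj; apply: (primitive_unit hj); rewrite /unitv /b2z eqxx. Qed.

Lemma sum_pm_interval n a b : (a <= b)%N ->
  \sum_(j < n) pm (a <= j < b)%N = 2 * (minn b n - minn a n)%N%:Z - n%:Z.
Proof.
move=> hab; elim: n => [|n IH]; first by rewrite big_ord0; lia.
by rewrite big_ord_recr /= IH /pm; case_ifs; lia.
Qed.

Lemma delta_unitv L j : (j < L)%N -> delta L (unitv j) = absz (L%:Z - 2 * j%:Z - 1)%R.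
Proof.
move=> hj; rewrite /delta /psi.
under eq_bigr => a _ do rewrite psum_unitv oddz_b2z -[(j <= a)%N]andbT -(ltn_ord a).
by rewrite sum_pm_interval; [congr absz; lia | exact: ltnW].
Qed.

Lemma delta_unitv2 L j k : (j < k)%N -> (k <= L)%N ->
  delta L (fun i => unitv j i + unitv k i) = absz (2 * (k - j)%N%:Z - L%:Z - 1)%R.
Proof.
move=> hjk hk; rewrite /delta /psi.
have inside (a : 'I_L) : oddz (psum a (fun i => unitv j i + unitv k i)) = (j <= a < k)%N.
  rewrite /psum big_split -!/(psum _ _) oddzD !psum_unitv !oddz_b2z.
  by case h1 : (j <= a)%N; case h2 : (k <= a)%N => //=; lia.
under eq_bigr => a _ do rewrite inside.
by rewrite sum_pm_interval; [congr absz; lia | exact: ltnW].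
Qed.

Definition canon (L m : nat) : vec :=
  fun i => (if m == 1%N then 0 else unitv m.-2 i) + unitv L.-1 i.

Section Canon.
Variables L m : nat.
Hypotheses (m_gt0 : (0 < m)%N) (m_le : (m.*2 <= L)%N).

Lemma delta_canon : delta L (canon L m) = (L.+1 - m.*2)%N.
Proof.
have [m1|m_neq1] := eqVneq m 1%N.
  have -> : canon L m = unitv L.-1.
    by apply: functional_extensionality => i; rewrite /canon m1 add0r.
  by rewrite delta_unitv; lia.
by rewrite /canon (negbTE m_neq1) delta_unitv2; lia.
Qed.

Lemma canon_last : canon L m L.-1 = 1.
Proof. by rewrite /canon /unitv /b2z; case_ifs; lia. Qed.

Lemma canon_supported : supported L (canon L m).
Proof. by move=> j hj; rewrite /canon /unitv /b2z; case_ifs; lia. Qed.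

Lemma canon_primitive : primitive L (canon L m).
Proof. by apply: (primitive_unit (j := L.-1)); rewrite ?canon_last //; lia. Qed.

End Canon.

Section Euclid.
Variable L : nat.
Hypothesis L_gt1 : (1 < L)%N.

Definition shrinks_last (e e' : vec) :=
  e' L.-1 != 0 /\ (e L.-1 != 0 -> `|e' L.-1| < `|e L.-1|)%N.

(* One Euclidean division of [b = e_(L-1)] into [a = e_(L-2)] gives the
   remainder [r], then [b] is replaced by [1 + (b - 1) mod r], which lies in [[1, r]]. *)
Lemma reach_shrinks_last_adjacent e : ~~ (e L.-1 %| e L.-2)%Z ->
  exists2 e', reach L e e' & shrinks_last e e'.
Proof.
move=> hnd; have hL1 : L.-1 = L.-2.+1 by lia.
rewrite /shrinks_last; set a := e L.-2 in hnd *; set b := e L.-1 in hnd *.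
have [b0|bn0] := eqVneq b 0.
  exists (twist L L.-2 1 e); first by apply: reach_twist; lia.
  rewrite hL1 twist_next -?hL1 -/a -/b ?b0; last by lia.
  by split=> //; rewrite add0r mul1r; apply: contra hnd => /eqP ->; rewrite dvdz0.
set e1 := twist L L.-1 (a %/ b)%Z e.
have e1a : e1 L.-2 = a - (a %/ b)%Z * b by rewrite /e1 twist_prev //; lia.
have e1b : e1 L.-1 = b by rewrite /e1 twist_at.
set r := e1 L.-2 in e1a; have rn0 : r != 0 by rewrite e1a; apply: contra hnd => /eqP; lia.
exists (twist L L.-2 (- ((b - 1) %/ r)%Z) e1).
  by apply: (reach_step (i := L.-1)); [lia | apply: reach_twist; lia].
by rewrite hL1 twist_next -?hL1 ?e1b; [split; [|move=> _]; lia | lia].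
Qed.

(* Walk the non-divisible coordinate up to [L-2], keeping [e_(L-1)] fixed. *)
Lemma reach_shrinks_last e j : (j < L.-1)%N -> ~~ (e L.-1 %| e j)%Z ->
  exists2 e', reach L e e' & shrinks_last e e'.
Proof.
move: {2}(L.-2 - j)%N (erefl (L.-2 - j)%N) => k.
elim: k j e => [|k IH] j e hk hj hnd.
  by apply: reach_shrinks_last_adjacent; rewrite (_ : L.-2 = j) //; lia.
have [hdv|hndv] := boolP (e L.-1 %| e j.+1)%Z; last by apply: (IH j.+1) => //; lia.
set e1 := twist L j 1 e.
have e1L : e1 L.-1 = e L.-1 by rewrite /e1 twist_other //; lia.
have e1j : e1 j.+1 = e j.+1 + e j by rewrite /e1 twist_next ?mul1r //; lia.
have [e' r he'] : exists2 e', reach L e1 e' & shrinks_last e1 e'.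
  apply: (IH j.+1); [lia | lia | rewrite e1L e1j].
  by apply: contra hnd => h; have := rpredB h hdv; rewrite addrC addKr.
by exists e'; [apply: reach_step r; lia | rewrite /shrinks_last -e1L].
Qed.

Lemma exists_ndvd_last e : primitive L e -> e L.-1 * e L.-1 != 1 ->
  exists2 j, (j < L.-1)%N & ~~ (e L.-1 %| e j)%Z.
Proof.
move=> hp hb.
have [/existsP[j hj]|] := boolP [exists j : 'I_L.-1, ~~ (e L.-1 %| e j)%Z]; first by exists j.
rewrite negb_exists => /forallP hall; exfalso; move: hb; apply/negP/negPn.
have : (e L.-1 %| 1)%Z.
  apply: hp => j hj; have [->|hjL] := eqVneq j L.-1; first exact: dvdzz.
  have hj' : (j < L.-1)%N by lia.
  by have := hall (Ordinal hj'); rewrite negbK.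
by rewrite dvdz1 => /eqP h; apply/eqP; have [->|->] : e L.-1 = 1 \/ e L.-1 = -1 by lia.
Qed.

Lemma reach_last_unit e : primitive L e -> exists2 e', reach L e e' & e' L.-1 * e' L.-1 = 1.
Proof.
have nz n e0 : (`|e0 L.-1| <= n)%N -> primitive L e0 -> e0 L.-1 != 0 ->
    exists2 e', reach L e0 e' & e' L.-1 * e' L.-1 = 1.
  elim: n e0 => [|n IH] e0 hn hp hb; first by lia.
  have [hu|hu] := eqVneq (e0 L.-1 * e0 L.-1) 1; first by exists e0; [exact: reach_refl|].
  have [j hj hnd] := exists_ndvd_last hp hu.
  have [e' r [h1 h2]] := reach_shrinks_last hj hnd.
  have [|e'' r' h''] := IH e' _ (reach_primitive r hp) h1; first by have := h2 hb; lia.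
  by exists e''; first exact: reach_trans r r'.
move=> hp; have [b0|] := eqVneq (e L.-1) 0; last exact: nz.
have [j hj hnd] : exists2 j, (j < L.-1)%N & ~~ (e L.-1 %| e j)%Z.
  by apply: exists_ndvd_last; rewrite ?b0 ?mul0r.
have [e' r [h1 _]] := reach_shrinks_last hj hnd.
have [e'' r' h''] := nz _ e' (leqnn _) (reach_primitive r hp) h1.
by exists e''; first exact: reach_trans r r'.
Qed.

End Euclid.

Definition extend (P : nat) (q : vec) (a u : int) : vec :=
  fun j => if (j < P)%N then q j else if j == P then a else if j == P.+1 then u else 0.

Lemma extend_eq P q q' a u : (forall j, (j < P)%N -> q j = q' j) ->
  extend P q a u = extend P q' a u.
Proof. by move=> h; apply: functional_extensionality => j; rewrite /extend; case: ifP => // /h. Qed.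

Lemma reach_extend_clear P q a u : u * u = 1 -> reach P.+2 (extend P q a u) (extend P q 0 u).
Proof.
move=> hu; have -> : extend P q 0 u = twist P.+2 P.+1 (a * u) (extend P q a u).
  apply: functional_extensionality => j; rewrite /twist /extend.
  by case_ifs; rewrite -?mulrA ?hu; try lia; ring.
by apply: reach_twist; lia.
Qed.

Lemma reach_extend P q q' u : u * u = 1 -> reach P q q' ->
  reach P.+2 (extend P q 0 u) (extend P q' 0 u).
Proof.
move=> hu; elim=> [e|e i t e' hi _ IH]; first exact: reach_refl.
have e1 : twist P.+2 i t (extend P e 0 u) =
          extend P (twist P i t e) (b2z (i.+1 == P) * t * e i) u.
  by apply: functional_extensionality => j; rewrite /twist /extend /b2z; case_ifs; try lia; ring.
apply: (reach_step (i := i) (t := t)); first lia.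
by rewrite e1; apply: reach_trans (reach_extend_clear _ _ _ hu) IH.
Qed.

Lemma reach_extend_opp P q u : (0 < P)%N -> u * u = 1 ->
  reach P.+2 (extend P q 0 u) (extend P (fun j => q j + 2 * u * unitv P.-1 j) 0 (- u)).
Proof.
move=> hP hu.
have e1 : twist P.+2 P.+1 (-1) (extend P q 0 u) = extend P q u u.
  by apply: functional_extensionality => j; rewrite /twist /extend; case_ifs; try lia; ring.
have e2 : twist P.+2 P (-2) (extend P q u u) =
          extend P (fun j => q j + 2 * u * unitv P.-1 j) u (- u).
  apply: functional_extensionality => j; rewrite /twist /extend /unitv /b2z.
  by case_ifs; try lia; ring.
apply: (reach_step (i := P.+1) (t := -1)); first lia.
rewrite e1; apply: (reach_step (i := P) (t := -2)); first lia.
by rewrite e2; apply: reach_extend_clear; rewrite mulrNN.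
Qed.

Definition dipole (k : nat) (x y : int) : vec :=
  fun j => if j == k then x else if j == k.+1 then y else 0.

Lemma reach_dipole_left L k x : (k.+1 < L)%N -> reach L (dipole k x x) (dipole 0 x x).
Proof.
elim: k => [|k IH] hk; first exact: reach_refl.
apply: (reach_step (i := k.+1) (t := -1)); first lia.
have -> : twist L k.+1 (-1) (dipole k.+1 x x) = dipole k x x.
  by apply: functional_extensionality => j; rewrite /twist /dipole; case_ifs; try lia; ring.
by apply: IH; lia.
Qed.

Lemma reach_dipole_right L k : (k.+1 < L)%N ->
  reach L (dipole 0 1 (-1)) (dipole k ((-1) ^+ k) (- (-1) ^+ k)).
Proof.
elim: k => [|k IH] hk; first by rewrite expr0; exact: reach_refl.
apply: reach_trans (IH _) _; first lia.
have -> : dipole k.+1 ((-1) ^+ k.+1) (- (-1) ^+ k.+1) =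
          twist L k.+1 (-1) (dipole k ((-1) ^+ k) (- (-1) ^+ k)).
  by apply: functional_extensionality => j; rewrite /twist /dipole exprS; case_ifs; try lia; ring.
by apply: reach_twist; lia.
Qed.

(* The unit vector [e_(L-1)] travels, as a dipole, to the left end and back;
   for even [L] it returns with the opposite sign. *)
Lemma reach_unitv_last_opp L : (1 < L)%N -> ~~ odd L ->
  reach L (unitv L.-1) (scalev (-1) (unitv L.-1)).
Proof.
move=> hL hev.
apply: (reach_step (i := L.-1) (t := -1)); first lia.
have -> : twist L L.-1 (-1) (unitv L.-1) = dipole L.-2 1 1.
  apply: functional_extensionality => j; rewrite /twist /dipole /unitv /b2z.
  by case_ifs; try lia; ring.
apply: reach_trans (reach_dipole_left _ _) _; first lia.
apply: (reach_step (i := 0) (t := -1)); first lia.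
apply: (reach_step (i := 0) (t := -1)); first lia.
have -> : twist L 0 (-1) (twist L 0 (-1) (dipole 0 1 1)) = dipole 0 1 (-1).
  by apply: functional_extensionality => j; rewrite /twist /dipole; case_ifs; try lia; ring.
apply: reach_trans (reach_dipole_right (k := L.-2) _) _; first lia.
have -> : (-1) ^+ L.-2 = 1 :> int.
  by rewrite -signr_odd; case: L hL hev => [|[|L]] //= _; case: (odd L).
apply: (reach_step (i := L.-1) (t := -1)); first lia.
have -> : twist L L.-1 (-1) (dipole L.-2 1 (-1)) = scalev (-1) (unitv L.-1).
  apply: functional_extensionality => j; rewrite /twist /dipole /scalev /unitv /b2z.
  by case_ifs; try lia; ring.
exact: reach_refl.
Qed.

Lemma dvdz_anti_ge0 (x y : int) : 0 <= x -> 0 <= y -> (x %| y)%Z -> (y %| x)%Z -> x = y.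
Proof.
case: x y => [x|//] [y|//] _ _; rewrite !dvdzE /= => h1 h2.
by congr Posz; apply/eqP; rewrite eqn_dvd h1 h2.
Qed.

Definition gcdv (L : nat) (e : vec) : int := \big[gcdz/0]_(j < L) e j.

Section Gcd.
Variables (L : nat) (e : vec).

Lemma gcdvE : gcdv L e = (\big[gcdn/0%N]_(j < L) `|e j|%N)%:Z.
Proof. by rewrite /gcdv; elim/big_rec2: _ => // j x y _ ->. Qed.

Lemma gcdv_ge0 : 0 <= gcdv L e.
Proof. by rewrite gcdvE. Qed.

Lemma dvdv_gcdv : dvdv L (gcdv L e) e.
Proof. by move=> j hj; rewrite gcdvE dvdzE absz_nat (biggcdn_inf (Ordinal hj)). Qed.

Lemma dvdz_gcdv d : dvdv L d e -> (d %| gcdv L e)%Z.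
Proof.
move=> hd; apply: (big_ind (fun x => (d %| x)%Z)) => [|x y hx hy|j _].
- exact: dvdz0.
- by rewrite dvdz_gcd hx hy.
- exact: hd.
Qed.

Lemma gcdv_eq0 : (gcdv L e == 0) = [forall j : 'I_L, e j == 0].
Proof.
apply/eqP/forallP => [h0 j|h0]; first by have := dvdv_gcdv (ltn_ord j); rewrite h0 dvd0z.
by apply/eqP; rewrite -dvd0z; apply: dvdz_gcdv => j hj; rewrite (eqP (h0 (Ordinal hj))).
Qed.

Definition primpart : vec := fun j => if (j < L)%N then (e j %/ gcdv L e)%Z else 0.

Lemma primpartK j : (j < L)%N -> gcdv L e * primpart j = e j.
Proof. by move=> hj; rewrite /primpart hj mulrC divzK //; apply: dvdv_gcdv. Qed.

Lemma primpart_supported : supported L primpart.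
Proof. by move=> j hj; rewrite /primpart ifF //; lia. Qed.

Lemma primpart_primitive : gcdv L e != 0 -> primitive L primpart.
Proof.
move=> hg d hd; rewrite -(dvdz_mul2r hg) mul1r.
by apply: dvdz_gcdv => j hj; rewrite -primpartK // mulrC dvdz_mul ?hd.
Qed.

Lemma scalev_primpart : supported L e -> scalev (gcdv L e) primpart = e.
Proof.
move=> hs; apply: functional_extensionality => j; rewrite /scalev.
by case: (ltnP j L) => hj; [rewrite primpartK | rewrite hs // /primpart ltnNge hj mulr0].
Qed.

End Gcd.

Lemma gcdv_eq L e e' : (forall d, dvdv L d e -> dvdv L d e') ->
  (forall d, dvdv L d e' -> dvdv L d e) -> gcdv L e = gcdv L e'.
Proof.
move=> h h'; apply: dvdz_anti_ge0; rewrite ?gcdv_ge0 // dvdz_gcdv //.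
- exact/h/dvdv_gcdv.
- exact/h'/dvdv_gcdv.
Qed.

Definition reaches_canon (L : nat) := forall e, supported L e -> primitive L e ->
  exists2 m, (0 < m /\ m.*2 <= L)%N & reach L e (canon L m).

Definition delta_complete (L : nat) := forall q r, supported L q -> supported L r ->
  primitive L q -> primitive L r -> delta L q = delta L r -> reach L q r.

Lemma reaches_canon_delta_complete L : reaches_canon L -> delta_complete L.
Proof.
move=> hR q r sq sr pq pr hd.
have [m1 [m1_gt0 m1_le] r1] := hR q sq pq; have [m2 [m2_gt0 m2_le] r2] := hR r sr pr.
move: hd; rewrite -(reach_delta r1) -(reach_delta r2) !delta_canon // => hm.
have em : m2 = m1 by lia.
by rewrite em in r2; apply: reach_trans r1 (reach_sym r2).
Qed.

Lemma reach_extend_last_unit P e : supported P.+2 e -> primitive P.+2 e ->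
  exists q u, u * u = 1 /\ reach P.+2 e (extend P q 0 u).
Proof.
move=> hs hp; have [e1 r1 hu] := reach_last_unit (isT : (1 < P.+2)%N) hp.
have s1 := reach_supported r1 hs.
exists e1, (e1 P.+1); split => //; apply: reach_trans r1 _.
have {1}-> : e1 = extend P e1 (e1 P) (e1 P.+1).
  apply: functional_extensionality => j; rewrite /extend.
  by case: ltnP => // ?; do 2 case: eqP => [->//|?]; rewrite s1 //; lia.
exact: reach_extend_clear.
Qed.

Lemma reach_extend0_canon1 P q u : ~~ odd P -> u * u = 1 -> (forall j, (j < P)%N -> q j = 0) ->
  reach P.+2 (extend P q 0 u) (canon P.+2 1).
Proof.
move=> hev hu hq; have -> : canon P.+2 1 = unitv P.+1.
  by apply: functional_extensionality => j; rewrite /canon add0r.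
have -> : extend P q 0 u = scalev u (unitv P.+1).
  apply: functional_extensionality => j; rewrite /extend /scalev /unitv /b2z.
  by case_ifs; rewrite ?hq ?mulr1 ?mulr0 //; lia.
have [->|->] : u = 1 \/ u = -1 by lia.
  have -> : scalev 1 (unitv P.+1) = unitv P.+1.
    by apply: functional_extensionality => j; rewrite /scalev mul1r.
  exact: reach_refl.
by apply: reach_sym; apply: (reach_unitv_last_opp (L := P.+2)); rewrite //= !negbK.
Qed.

Section Step.
Variable P : nat.
Hypotheses (P_gt0 : (0 < P)%N) (P_even : ~~ odd P) (canonP : reaches_canon P).

Let connectP := reaches_canon_delta_complete canonP.

Lemma reach_extend_unitv q v j : supported P q -> primitive P q ->
  delta P q = delta P (unitv j) -> (j < P.-1)%N -> v * v = 1 ->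
  reach P.+2 (extend P q 0 v) (extend P (unitv j) 0 1).
Proof.
move=> sq pq hd hj hv.
have hjP : (j < P)%N by lia.
have sj := unitv_supported hjP; have pj := unitv_primitive hjP.
apply: reach_trans (reach_extend hv (connectP sq sj pq pj hd)) _.
have [->|->] : v = 1 \/ v = -1 by lia.
  exact: reach_refl.
apply: reach_trans (reach_extend_opp _ P_gt0 (_ : -1 * -1 = 1)) _; first by rewrite mulrNN mulr1.
rewrite opprK; apply: reach_extend => //; apply: connectP => //.
- by move=> i hi; rewrite /unitv /b2z; case_ifs; lia.
- by apply: (primitive_unit (j := j)); [lia | rewrite /unitv /b2z; case_ifs; lia].
- by apply: delta_eqmod2 => i hi; rewrite oddzD oddzM andFb addbF.
Qed.

(* With [q ~ -v e_(P-1)] (resp. [q ~ e_(P-m-1)]) one sign change of the last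
   coordinate cancels (resp. lowers [m] in) the doubled part. *)
Lemma reach_extend_double_canon1 m q v : (0 < m)%N -> (m.*2 <= P)%N ->
  supported P q -> primitive P q -> delta P q = (P.+1 - m.*2)%N -> v * v = 1 ->
  reach P.+2 (extend P (scalev 2 q) 0 v) (canon P.+2 1).
Proof.
elim: m q v => [//|m IH] q v _ hm sq pq hd hv.
have hP1 : (P.-1 < P)%N by lia.
have hvo : oddz v by have [->|->] : v = 1 \/ v = -1 by lia.
have [m0|m_gt0] := posnP m.
  set r := scalev (- v) (unitv P.-1).
  have sr : supported P r by move=> i /(unitv_supported hP1) hi; rewrite /r /scalev hi mulr0.
  have pr : primitive P r.
    by apply: (primitive_unit hP1); rewrite /r /scalev /unitv /b2z eqxx mulr1 mulrNN.
  have hdr : delta P q = delta P r.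
    rewrite hd (@delta_eqmod2 _ r (unitv P.-1)) ?delta_unitv //; first lia.
    by move=> i hi; rewrite /r /scalev oddzM oddzN hvo.
  apply: reach_trans (reach_extend hv (reach_scalev 2 (connectP sq sr pq pr hdr))) _.
  apply: reach_trans (reach_extend_opp _ P_gt0 hv) _.
  rewrite (@extend_eq _ _ (fun _ => 0)); first by apply: reach_extend0_canon1; rewrite ?mulrNN.
  by move=> i hi; rewrite /r /scalev; ring.
set j1 := (P - m.+1)%N; have hj1 : (j1 < P)%N by lia.
have hd1 : delta P q = delta P (unitv j1) by rewrite hd delta_unitv; lia.
have r1 := connectP sq (unitv_supported hj1) pq (unitv_primitive hj1) hd1.
move/(reach_scalev 2)/(reach_extend hv): r1 => r1.
set q' := fun i => unitv j1 i + v * unitv P.-1 i.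
have r2 : reach P.+2 (extend P (scalev 2 (unitv j1)) 0 v) (extend P (scalev 2 q') 0 (- v)).
  have -> : scalev 2 q' = (fun i => scalev 2 (unitv j1) i + 2 * v * unitv P.-1 i).
    by apply: functional_extensionality => i; rewrite /scalev /q'; ring.
  exact: reach_extend_opp.
apply: reach_trans r1 (reach_trans r2 (IH _ _ m_gt0 _ _ _ _ _)); rewrite ?mulrNN //; try lia.
- by move=> i hi; rewrite /q' /unitv /b2z; case_ifs; lia.
- by apply: (primitive_unit hj1); rewrite /q' /unitv /b2z; case_ifs; lia.
- rewrite (@delta_eqmod2 _ q' (fun i => unitv j1 i + unitv P.-1 i)) ?delta_unitv2; try lia.
  by move=> i hi; rewrite /q' !oddzD oddzM hvo.
Qed.

Lemma reach_odd_multiple g j u : oddz g -> (j.+1.*2 <= P)%N -> u * u = 1 ->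
  reach P.+2 (extend P (scalev g (unitv j)) 0 u) (canon P.+2 j.+2).
Proof.
move=> hg hj hu; apply: reach_trans (reach_extend_opp _ P_gt0 hu) _.
have -> : canon P.+2 j.+2 = extend P (unitv j) 0 1.
  by apply: functional_extensionality => i; rewrite /canon /extend /unitv /b2z; case_ifs; lia.
apply: reach_extend_unitv; rewrite ?mulrNN //; try lia.
- by move=> i hi; rewrite /scalev /unitv /b2z; case_ifs; lia.
- move=> d hd; have hjP : (j < P)%N by lia.
  have hP1 : (P.-1 < P)%N by lia.
  have dg : (d %| g)%Z.
    move: (hd j hjP); rewrite /scalev /unitv /b2z.
    by case_ifs; rewrite ?mulr1 ?mulr0 ?addr0 //; lia.
  have d2 : (d %| 2)%Z.
    move: (hd _ hP1); rewrite /scalev /unitv /b2z; case_ifs; rewrite ?mulr1 ?mulr0 ?add0r; try lia.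
    by move=> /(dvdz_mulr u); rewrite -mulrA hu mulr1.
  have -> : 1 = g - (g %/ 2)%Z * 2 :> int by move: hg; rewrite /oddz; lia.
  by rewrite rpredB ?dvdz_mull.
- apply: delta_eqmod2 => i hi; rewrite /scalev oddzD !oddzM hg.
  by rewrite (_ : oddz 2 = false) // andFb addbF.
Qed.

Lemma reach_even_multiple g j u : ~~ oddz g -> (j < P.-1)%N -> u * u = 1 ->
  reach P.+2 (extend P (scalev g (unitv j)) 0 u) (canon P.+2 1).
Proof.
move=> hg hj hu; apply: reach_trans (reach_extend_opp _ P_gt0 hu) _.
set q2 := fun i => (g %/ 2)%Z * unitv j i + u * unitv P.-1 i.
have -> : (fun i => scalev g (unitv j) i + 2 * u * unitv P.-1 i) = scalev 2 q2.
  apply: functional_extensionality => i; rewrite /scalev /q2.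
  by rewrite {1}(_ : g = 2 * (g %/ 2)%Z); [ring | move: hg; rewrite /oddz; lia].
have sq2 : supported P q2 by move=> i hi; rewrite /q2 /unitv /b2z; case_ifs; lia.
have pq2 : primitive P q2.
  by apply: (primitive_unit (j := P.-1)); rewrite /q2 /unitv /b2z; case_ifs; lia.
have [m [m_gt0 m_le] r] := canonP sq2 pq2.
apply: (reach_extend_double_canon1 m_gt0 m_le) => //; last by rewrite mulrNN.
by rewrite -(reach_delta r) delta_canon.
Qed.

End Step.

Lemma reaches_canon_step P : ~~ odd P -> ((0 < P)%N -> reaches_canon P) ->
  reaches_canon P.+2.
Proof.
move=> hev IH e hs hp.
have [q [u [hu r1]]] := reach_extend_last_unit hs hp.
have [hz|hnz] := eqVneq (gcdv P q) 0.
  exists 1%N; first by lia.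
  apply: reach_trans r1 (reach_extend0_canon1 hev hu _) => j hj.
  by move/eqP: hz; rewrite gcdv_eq0 => /forallP /(_ (Ordinal hj)) /eqP.
have hP : (0 < P)%N.
  by case: (posnP P) => [P0|//]; move: hnz; rewrite /gcdv P0 big_ord0 eqxx.
have canonP := IH hP; set g := gcdv P q.
have [m [m_gt0 m_le] r2] := canonP _ (@primpart_supported P q) (primpart_primitive hnz).
have hm : (m.-1 < P)%N by lia.
have r3 : reach P (primpart P q) (unitv m.-1).
  apply: reach_trans r2 (reaches_canon_delta_complete canonP _ _ _ _ _).
  - exact: canon_supported.
  - exact: unitv_supported.
  - exact: canon_primitive.
  - exact: unitv_primitive.
  - by rewrite delta_canon // delta_unitv //; lia.
have r4 : reach P.+2 e (extend P (scalev g (unitv m.-1)) 0 u).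
  apply: reach_trans r1 _; rewrite (@extend_eq _ q (scalev g (primpart P q))).
    exact: reach_extend hu (reach_scalev g r3).
  by move=> j hj; rewrite /scalev primpartK.
have [hg|hg] := boolP (oddz g).
  exists m.+1; first by lia.
  have -> : m.+1 = m.-1.+2 by lia.
  by apply: reach_trans r4 (reach_odd_multiple hP hev canonP hg _ hu); lia.
exists 1%N; first by lia.
by apply: reach_trans r4 (reach_even_multiple hP hev canonP hg _ hu); lia.
Qed.

(* [reaches_canon 0] holds vacuously: no vector is primitive in length [0]. *)
Lemma reaches_canon_double s : reaches_canon s.*2.
Proof.
elim: s => [e _ hp|s IH].
  by have : (2 %| 1)%Z by apply: hp => j; rewrite double0 ltn0.
by rewrite doubleS; apply: reaches_canon_step; rewrite ?odd_double.
Qed.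

Section Coordinates.
Variable n : nat.

Definition coord (k : 'cV[int]_n) (j : nat) : int := if insub j is Some o then k o 0 else 0.

Lemma coord_ord k (o : 'I_n) : coord k o = k o 0.
Proof. by rewrite /coord valK. Qed.

Definition diffs (k : 'cV[int]_n) : vec :=
  fun j => if (j < n)%N then coord k j - (if j is j'.+1 then coord k j' else 0) else 0.

Definition psums (e : vec) : 'cV[int]_n := \col_(a < n) psum a e.

Lemma coord_psums e j : (j < n)%N -> coord (psums e) j = psum j e.
Proof. by move=> hj; rewrite -[j]/(nat_of_ord (Ordinal hj)) coord_ord mxE. Qed.

Lemma psum_diffs k a : (a < n)%N -> psum a (diffs k) = coord k a.
Proof.
elim: a => [|a IH] ha; first by rewrite psum0 /diffs ha subr0.
by rewrite psumS IH 1?ltnW // /diffs ha subrKC.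
Qed.

Lemma psumsK k : psums (diffs k) = k.
Proof. by apply/matrixP => a b; rewrite ord1 mxE psum_diffs // coord_ord. Qed.

Lemma diffs_supported k : supported n (diffs k).
Proof. by move=> j hj; rewrite /diffs ifF //; lia. Qed.

Lemma sum_b2z_eq (F : nat -> int) p : (p < n)%N -> \sum_(b < n) b2z (b == p :> nat) * F b = F p.
Proof.
move=> hp; rewrite (bigD1 (Ordinal hp)) //= eqxx mul1r big1 ?addr0 // => b hb.
by rewrite /b2z ifF ?mul0r //; apply: contraNF hb => /eqP hb; apply/eqP/val_inj.
Qed.

Lemma sigma_mulmx (i a : 'I_n) k : (sigma i *m k) a 0 =
  if i == 0 :> nat then coord k a + b2z (a != 0 :> nat) * coord k 0
  else if a == i.-1 :> nat then 2 * coord k i.-1 - coord k i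
  else if a == i :> nat then coord k i.-1 else coord k a.
Proof.
have bE (x : bool) : (x%:R : int) = b2z x by case: x.
have sum2 (G : 'I_n -> int) (al be : int) p q : (p < n)%N -> (q < n)%N ->
    (forall b : 'I_n, G b = al * b2z (b == p :> nat) + be * b2z (b == q :> nat)) ->
    \sum_(b < n) G b * coord k b = al * coord k p + be * coord k q.
  move=> hp hq hG; under eq_bigr do rewrite hG mulrDl -!mulrA.
  by rewrite big_split -!mulr_sumr /= !sum_b2z_eq.
rewrite mxE; under eq_bigr do rewrite mxE -coord_ord !bE -!val_eqE /=.
case: i a => [[|i] hi] [a ha] /=.
  by rewrite (sum2 _ 1 (b2z (a != 0%N)) a 0%N) ?mul1r //; try lia;
     move=> b; rewrite /b2z; case_ifs; lia.
have [_|ai] := eqVneq a i.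
  by rewrite (sum2 _ 2 (-1) i i.+1) ?mulN1r //; try lia;
     move=> b; rewrite /b2z; case_ifs; lia.
have [_|ai'] := eqVneq a i.+1.
  by rewrite (sum2 _ 1 0 i i) ?mul1r ?mul0r ?addr0 //; try lia;
     move=> b; rewrite /b2z; case_ifs; lia.
by rewrite (sum2 _ 1 0 a a) ?mul1r ?mul0r ?addr0 //; try lia;
   move=> b; rewrite /b2z; case_ifs; lia.
Qed.

Lemma sigma_psums (i : 'I_n) e : sigma i *m psums e = psums (twist n i 1 e).
Proof.
apply/matrixP => a z; rewrite ord1 sigma_mulmx mxE psum_twist // mul1r.
case: i => [[|i] hi] /=.
  by rewrite !coord_psums // psum0 /b2z; case_ifs; lia.
rewrite !coord_psums //; try lia; move: (psumS i e); rewrite /b2z.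
have [->|ai] := eqVneq (a : nat) i; first by case_ifs; lia.
by have [->|ai'] := eqVneq (a : nat) i.+1; case_ifs; lia.
Qed.

Lemma sigma_unit (i : 'I_n) : sigma i \in unitmx.
Proof.
set M : 'M[int]_n := \matrix_(a, b) psums (twist n i (-1) (diffs (col b 1%:M))) a 0.
suff /mulmx1_unit[] : sigma i *m M = 1%:M by [].
apply/matrixP => a b.
have -> : (sigma i *m M) a b = (sigma i *m col b M) a 0.
  by rewrite !mxE; apply: eq_bigr => c _; rewrite !mxE.
have -> : col b M = psums (twist n i (-1) (diffs (col b 1%:M))).
  by apply/matrixP => c d; rewrite ord1 !mxE.
by rewrite sigma_psums twistD addrN twist0 psumsK mxE.
Qed.

Lemma invmx_sigma_psums (i : 'I_n) e : invmx (sigma i) *m psums e = psums (twist n i (-1) e).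
Proof.
have := sigma_psums i (twist n i (-1) e); rewrite twistD addrN twist0 => <-.
by rewrite mulmxA mulVmx ?mul1mx // sigma_unit.
Qed.

Lemma twist_psums_inG (i : 'I_n) (t : int) :
  exists2 h, inG h & forall e, psums (twist n i t e) = h *m psums e.
Proof.
case: t => m; elim: m => [|m [h hh IH]].
- by exists 1%:M; [exact: inG_one | move=> e; rewrite twist0 mul1mx].
- exists (sigma i *m h); first by apply: inG_mul => //; exact: inG_gen.
  by move=> e; rewrite -mulmxA -IH sigma_psums twistD; congr (psums (twist _ _ _ _)); lia.
- by exists (invmx (sigma i)); [exact: inG_inv | move=> e; rewrite invmx_sigma_psums].
- exists (invmx (sigma i) *m h); first by apply: inG_mul => //; exact: inG_inv.
  by move=> e; rewrite -mulmxA -IH invmx_sigma_psums twistD; congr (psums (twist _ _ _ _)); lia.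
Qed.

Lemma reach_same_orbit e e' : reach n e e' -> same_orbit (psums e) (psums e').
Proof.
elim=> [x|x i t x' hi _ [g hg ->]]; first by exists 1%:M; [exact: inG_one | rewrite mul1mx].
have [h hh ->] := twist_psums_inG (Ordinal hi) t.
by exists (g *m h); [exact: inG_mul | rewrite mulmxA].
Qed.

End Coordinates.

Lemma sum_pm_count n (f : nat -> bool) :
  \sum_(a < n) pm (f a) = 2 * (\sum_(a < n) f a)%N%:Z - n%:Z.
Proof.
elim: n => [|n IH]; first by rewrite !big_ord0.
by rewrite !big_ord_recr /= IH /pm; case: (f n) => /=; lia.
Qed.

Lemma card_set_sum n (P : pred 'I_n) : #|[set a | P a]| = (\sum_(a < n) P a)%N.
Proof. by rewrite -sum1dep_card big_mkcond /=; apply: eq_bigr => a _; case: (P a). Qed.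

Section Invariants.
Variable n : nat.

Lemma gcdv_twist i t e : (i < n)%N -> gcdv n (twist n i t e) = gcdv n e.
Proof.
move=> hi; apply: gcdv_eq => d; last exact: twist_dvdv.
by rewrite -{2}(twistK n i t e); apply: twist_dvdv.
Qed.

Lemma twist_eq_below i t e e' : (i < n)%N -> (forall j, (j < n)%N -> e j = e' j) ->
  forall j, (j < n)%N -> twist n i t e j = twist n i t e' j.
Proof. by move=> hi h j hj; rewrite /twist !h //; case_ifs; lia. Qed.

Lemma primpart_twist i t e : (i < n)%N -> gcdv n e != 0 ->
  forall j, (j < n)%N -> primpart n (twist n i t e) j = twist n i t (primpart n e) j.
Proof.
move=> hi hg j hj; apply: (mulfI hg).
rewrite -{1}(gcdv_twist t e hi) primpartK // -/(scalev _ _ j) -twist_scalev.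
by apply: twist_eq_below => // j' hj'; rewrite /scalev primpartK.
Qed.

Lemma delta_primpart_twist i t e : (i < n)%N -> gcdv n e != 0 ->
  delta n (primpart n (twist n i t e)) = delta n (primpart n e).
Proof.
move=> hi hg; rewrite -(delta_twist t (primpart n e) hi).
by apply: delta_eqmod2 => j hj; rewrite primpart_twist.
Qed.

Lemma reach_gcdv e e' : reach n e e' -> gcdv n e' = gcdv n e.
Proof. by elim=> // x i t x' hi _ ->; rewrite gcdv_twist. Qed.

Lemma reach_delta_primpart e e' : reach n e e' -> gcdv n e != 0 ->
  delta n (primpart n e') = delta n (primpart n e).
Proof.
elim=> // x i t x' hi _ IH hg.
by rewrite IH ?gcdv_twist // delta_primpart_twist.
Qed.

Lemma psum_primpart e a : (a < n)%N -> psum a e = gcdv n e * psum a (primpart n e).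
Proof.
move=> ha; rewrite /psum mulr_sumr; apply: eq_bigr => -[k hk] _.
by rewrite primpartK //=; lia.
Qed.

Lemma gammaK_psums e : gammaK (psums n e) = gcdv n e.
Proof.
rewrite /gammaK (eq_bigr (fun j : 'I_n => psum j e)) => [|j _]; last by rewrite mxE.
apply: (@gcdv_eq n (fun j => psum j e)) => d hd j hj.
- case: j hj => [|j] hj; first by rewrite -psum0 hd.
  by rewrite -[e j.+1](addKr (psum j e)) -psumS rpredD ?rpredN ?hd //; lia.
- elim: j hj => [|j IH] hj; first by rewrite psum0 hd.
  by rewrite psumS rpredD ?hd ?IH //; lia.
Qed.

Lemma deltaK_psums e : gcdv n e != 0 -> deltaK (psums n e) = delta n (primpart n e).
Proof.
move=> hg; rewrite /deltaK /alphaK gammaK_psums card_set_sum /delta /psi.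
rewrite (sum_pm_count n (fun a => oddz (psum a (primpart n e)))).
rewrite (eq_bigr (fun a : 'I_n => oddz (psum a (primpart n e)) : nat)).
  by congr absz; rewrite PoszM; ring.
by move=> j _; rewrite mxE psum_primpart // mulKz.
Qed.

Lemma psums_eq0 e : gcdv n e = 0 -> psums n e = 0.
Proof.
move=> /eqP; rewrite gcdv_eq0 => /forallP he; apply/matrixP => a b; rewrite !mxE /psum.
by rewrite big1 // => -[j hj] _; have /eqP := he (Ordinal (leq_trans hj (ltn_ord a))).
Qed.

Lemma reach_invariants e e' : reach n e e' ->
  gammaK (psums n e') = gammaK (psums n e) /\ deltaK (psums n e') = deltaK (psums n e).
Proof.
move=> r; rewrite !gammaK_psums (reach_gcdv r); split => //.
have [hg|hg] := eqVneq (gcdv n e) 0.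
  by rewrite !psums_eq0 // (reach_gcdv r).
by rewrite !deltaK_psums ?(reach_gcdv r) // (reach_delta_primpart r).
Qed.

Lemma inG_invariants (g : 'M[int]_n) (k : 'cV[int]_n) : inG g ->
  gammaK (g *m k) = gammaK k /\ deltaK (g *m k) = deltaK k.
Proof.
move=> hg; elim: hg k => [|i|i|g1 g2 _ IH1 _ IH2] k.
- by rewrite mul1mx.
- by rewrite -(psumsK k) sigma_psums; apply: reach_invariants; apply: reach_twist.
- by rewrite -(psumsK k) invmx_sigma_psums; apply: reach_invariants; apply: reach_twist.
- by rewrite -mulmxA; case: (IH1 (g2 *m k)) => -> ->; apply: IH2.
Qed.

End Invariants.

Section Range.
Variables (n : nat) (k : 'cV[int]_n).

Lemma gammaK_coord : gammaK k = gcdv n (coord k).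
Proof. by apply: eq_bigr => j _; rewrite coord_ord. Qed.

Lemma gammaK_gt0 : k != 0 -> 0 < gammaK k.
Proof.
move=> hk; rewrite gammaK_coord lt_def gcdv_ge0 andbT gcdv_eq0; apply: contra hk.
by move=> /forallP hk0; apply/eqP/matrixP => a b; rewrite ord1 mxE -coord_ord; apply/eqP.
Qed.

(* If every [k_j / gamma] were even, [2 gamma] would divide [gamma]. *)
Lemma alphaK_gt0 : k != 0 -> (0 < alphaK k)%N.
Proof.
move=> hk; have hg := gammaK_gt0 hk; rewrite lt0n cards_eq0; apply/negP => /eqP h0.
have : (2 * gammaK k %| gammaK k)%Z.
  rewrite {1}gammaK_coord; apply: dvdz_gcdv => j hj.
  have := in_set0 (Ordinal hj); rewrite -h0 inE -coord_ord /= => /negbT hodd.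
  have gk : (gammaK k %| coord k j)%Z by rewrite gammaK_coord dvdv_gcdv.
  rewrite -(divzK gk) dvdz_mul2r ?gt_eqF //; apply/dvdz_mod0P; lia.
by rewrite dvdzE => /dvdn_leq; lia.
Qed.

End Range.

Lemma gammaK0 n : gammaK (0 : 'cV[int]_n) = 0.
Proof.
by rewrite gammaK_coord; apply/eqP; rewrite gcdv_eq0; apply/forallP => j; rewrite coord_ord mxE.
Qed.

Lemma invariants_range s (k : 'cV[int]_(s.*2)) : k != 0 ->
  0 < gammaK k /\ odd (deltaK k) /\ (deltaK k < s.*2)%N.
Proof.
move=> hk; split; first exact: gammaK_gt0.
have hb : (alphaK k <= s.*2)%N by rewrite /alphaK (leq_trans (max_card _)) ?card_ord.
rewrite /deltaK; move: (alphaK k) (alphaK_gt0 hk) hb => a ha hb.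
have -> : `|(2 * a)%:Z - (s.*2).+1%:Z|%N = (if (s < a)%N then a - s - 1 else s - a)%N.*2.+1.
  by case: ifP => ?; rewrite -!muln2; lia.
by rewrite /= odd_double; split => //; case: ifP => ?; rewrite -!muln2; lia.
Qed.

Lemma invariants_scaled_canon n g m : 0 < g -> (0 < m)%N -> (m.*2 <= n)%N ->
  gammaK (psums n (scalev g (canon n m))) = g /\
  deltaK (psums n (scalev g (canon n m))) = (n.+1 - m.*2)%N.
Proof.
move=> hg hm hmn; have gn0 : g != 0 by rewrite gt_eqF.
have eg : gcdv n (scalev g (canon n m)) = g.
  apply: dvdz_anti_ge0; rewrite ?gcdv_ge0 ?ltW //.
    have := @dvdv_gcdv n (scalev g (canon n m)) n.-1.
    by rewrite /scalev canon_last // mulr1; apply; lia.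
  by apply: dvdz_gcdv => j _; rewrite /scalev dvdz_mulr.
rewrite gammaK_psums eg deltaK_psums ?eg //; split => //.
rewrite -(delta_canon hm hmn); apply: delta_eqmod2 => j hj.
by congr oddz; apply: (mulfI gn0); rewrite -{1}eg primpartK.
Qed.

Section Classification.
Variable s : nat.
Notation n := s.*2.

Lemma reach_canonical_form (k : 'cV[int]_n) : k != 0 ->
  reach n (diffs k) (scalev (gammaK k) (canon n (n.+1 - deltaK k)./2)).
Proof.
move=> hk; have eg : gammaK k = gcdv n (diffs k) by rewrite -{1}(psumsK k) gammaK_psums.
have hg : gcdv n (diffs k) != 0 by rewrite -eg gt_eqF ?gammaK_gt0.
have [m [hm hmn] r] :=
  @reaches_canon_double s _ (@primpart_supported n (diffs k)) (primpart_primitive hg).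
have r' : reach n (diffs k) (scalev (gammaK k) (canon n m)).
  by rewrite -{1}(scalev_primpart (diffs_supported k)) -eg; apply: reach_scalev.
have [_ ed] := reach_invariants r'.
rewrite psumsK (invariants_scaled_canon _ hm hmn).2 in ed; last by rewrite gammaK_gt0.
by rewrite -ed (_ : (n.+1 - (n.+1 - m.*2))./2 = m) // -!muln2 subKn ?mulnK //; lia.
Qed.

Lemma same_orbit_of_invariants (k k' : 'cV[int]_n) : k != 0 -> k' != 0 ->
  gammaK k = gammaK k' -> deltaK k = deltaK k' -> same_orbit k k'.
Proof.
move=> hk hk' eg ed; rewrite -(psumsK k) -(psumsK k'); apply: reach_same_orbit.
apply: reach_trans (reach_canonical_form hk) _.
by rewrite eg ed; apply/reach_sym/reach_canonical_form.
Qed.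

Lemma invariants_surjective g d : 0 < g -> odd d -> (d < n)%N ->
  exists k : 'cV[int]_n, [/\ k != 0, gammaK k = g & deltaK k = d].
Proof.
move=> hg hd hdn; have dE : d = d./2.*2.+1 by rewrite -[LHS]odd_double_half hd add1n.
have [||eg ed] := invariants_scaled_canon (n := n) (m := s - d./2) hg.
- by move: hdn; rewrite dE -!muln2; lia.
- by move: hdn; rewrite dE -!muln2; lia.
exists (psums n (scalev g (canon n (s - d./2)))); split => //.
- by apply/eqP => h0; move: hg; rewrite -eg h0 gammaK0 ltxx.
- by rewrite ed {2}dE -!muln2; move: hdn; rewrite dE -!muln2; lia.
Qed.

End Classification.

Unset Implicit Arguments.

Theorem mainTheorem5 (s : nat) (hs : (1 <= s)%N) :
  (* the invariants take values in Z_{>0} x {1,3,...,2s-1} *)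
  (forall k : 'cV[int]_(s.*2), k != 0 ->
     0 < gammaK k /\ odd (deltaK k) /\ (deltaK k < s.*2)%N) /\
  (* (gamma, delta) is constant on orbits and separates orbits *)
  (forall k k' : 'cV[int]_(s.*2), k != 0 -> k' != 0 ->
     (same_orbit k k' <-> gammaK k = gammaK k' /\ deltaK k = deltaK k')) /\
  (* every admissible pair is attained *)
  (forall (g : int) (d : nat), 0 < g -> odd d -> (d < s.*2)%N ->
     exists k : 'cV[int]_(s.*2), k != 0 /\ gammaK k = g /\ deltaK k = d).
Proof.
split; first exact: invariants_range.
split=> [k k' hk hk'|g d hg hd hds]; first split.
- by case=> h hh ->; case: (inG_invariants k hh).
- by case; apply: same_orbit_of_invariants.
- by have [k [hk eg ed]] := invariants_surjective hg hd hds; exists k.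
Qed.
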